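(* Let $G$ be a large scale group, let $K$ be a symmetric bounded subset of $G$ containing $1_G$, and let $B$ be a bounded subset of $G$ such that $G\setminus B$ has exactly two $K$-components $L$ and $R$, both unbounded, and $G$ acts trivially on $L$ and on $R$. Suppose one of the following holds: (1) $B$ is $K$-connected; (2) $B\subseteq h\cdot K^n$ for some $h\in G$ and $n\ge1$. Then $G$ has a cyclic subgroup of bounded index.
   Context: A bornology on a set is a cover closed under subsets and finite unions. A large scale group is a group $G$ with a bornology $\mathcal B$ closed under inverses and products; its uniformly bounded covers are the covers refining $\{gB\}_{g\in G}$ for some $B\in\mathcal B$; bounded sets are members of $\mathcal B$. $K^n$ denotes the $n$-fold product set $K\cdots K$. For a symmetric $K\subseteq G$ ($K^{-1}=K$), a $K$-chain is a finite sequence $g_1,\dots,g_k$ in $G$ with $g_i^{-1}g_{i+1}\in K$ for all $i<k$; a set $C$ is $K$-connected if any two of its elements are joined by a $K$-chain in $C$; the $K$-components of $A\subseteq G$ are the equivalence classes of $A$ under the relation ''joined by a $K$-chain lying in $A$''. $G$ acts trivially on $A\subseteq G$ if the symmetric difference $A\,\Delta\,(g\cdot A)$ is bounded for each $g\in G$. A subgroup $H$ is of bounded index if $B'\cdot H=G$ for some bounded $B'$. *)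

From Stdlib Require Import ZArith.

Set Implicit Arguments.

Record Group := {
  carrier :> Type;
  gmul : carrier -> carrier -> carrier;
  ginv : carrier -> carrier;
  gone : carrier;
  gmulA : forall x y z, gmul x (gmul y z) = gmul (gmul x y) z;
  gmul1l : forall x, gmul gone x = x;
  gmul1r : forall x, gmul x gone = x;
  gmulVl : forall x, gmul (ginv x) x = gone;
  gmulVr : forall x, gmul x (ginv x) = gone
}.

Definition gset (G : Type) := G -> Prop.

Section Sets.
Variable G : Group.

Definition subset (A B : gset G) := forall x, A x -> B x.
Definition seteq (A B : gset G) := forall x, A x <-> B x.
Definition setU (A B : gset G) : gset G := fun x => A x \/ B x.
Definition setD (A B : gset G) : gset G := fun x => A x /\ ~ B x.
Definition setSymD (A B : gset G) : gset G := setU (setD A B) (setD B A).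
Definition setT_ : gset G := fun _ => True.
Definition setinv (A : gset G) : gset G := fun x => exists a, A a /\ x = @ginv G a.
Definition setmul (A B : gset G) : gset G :=
  fun x => exists a b, A a /\ B b /\ x = @gmul G a b.
Definition ltrans (g : G) (A : gset G) : gset G :=
  fun x => exists a, A a /\ x = @gmul G g a.
Fixpoint setpow (K : gset G) (n : nat) : gset G :=
  match n with
  | O => fun x => x = gone G
  | S O => K
  | S m => setmul (setpow K m) K
  end.

Definition gpow (g : G) (n : nat) : G := Nat.iter n (fun y => @gmul G y g) (gone G).
Definition zpow (g : G) (z : Z) : G :=
  match z with
  | Z0 => gone G
  | Zpos p => gpow g (Pos.to_nat p)
  | Zneg p => @ginv G (gpow g (Pos.to_nat p))
  end.
Definition cyclic_sub (g : G) : gset G := fun x => exists z : Z, x = zpow g z.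

Definition symmetric (K : gset G) := forall x, K x <-> K (@ginv G x).

(** [Kjoined K A x y]: x and y are joined by a K-chain lying in A, i.e. a finite
    sequence x = g_1, ..., g_k = y of elements of A with g_i^-1 g_(i+1) in K. *)
Inductive Kjoined (K A : gset G) (x : G) : G -> Prop :=
  | Kj_refl : A x -> Kjoined K A x x
  | Kj_step : forall y z, Kjoined K A x y -> A z -> K (@gmul G (@ginv G y) z) ->
              Kjoined K A x z.

Definition Kconnected (K C : gset G) := forall x y, C x -> C y -> Kjoined K C x y.

(** C is a K-component of A: an equivalence class of A under "joined by a
    K-chain lying in A". *)
Definition Kcomponent (K A C : gset G) :=
  exists x, A x /\ (forall y, C y <-> Kjoined K A x y).

End Sets.

Arguments subset {G}. Arguments seteq {G}. Arguments setU {G}. Arguments setD {G}. Arguments setSymD {G}.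
Arguments setT_ {G}. Arguments setinv {G}. Arguments setmul {G}. Arguments ltrans {G}.
Arguments setpow {G}. Arguments gpow {G}. Arguments zpow {G}. Arguments cyclic_sub {G}.
Arguments symmetric {G}. Arguments Kjoined {G}. Arguments Kconnected {G}.
Arguments Kcomponent {G}.
Arguments gmul {g}. Arguments ginv {g}.

Record LSGroup := {
  lsgrp :> Group;
  bounded : gset lsgrp -> Prop;
  bnd_cover : forall x : lsgrp, exists B, bounded B /\ B x;
  bnd_sub : forall A B, bounded B -> @subset lsgrp A B -> bounded A;
  bnd_union : forall A B, bounded A -> bounded B -> bounded (@setU lsgrp A B);
  bnd_inv : forall A, bounded A -> bounded (@setinv lsgrp A);
  bnd_mul : forall A B, bounded A -> bounded B -> bounded (@setmul lsgrp A B)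
}.

Arguments bounded {l}.

Definition acts_trivially (G : LSGroup) (A : gset G) :=
  forall g : G, bounded (setSymD A (ltrans g A)).

Definition has_cyclic_bounded_index (G : LSGroup) :=
  exists (g : G) (B' : gset G), bounded B' /\
    (forall x : G, setmul B' (cyclic_sub g) x).
Arguments acts_trivially {G}.

(** Setting: [G \ B] splits into two unbounded K-components [L] and [R].
    1. Enlarge [B] to a bounded, K-connected, nonempty set [D] (hypothesis (1)
       or (2) is exactly what makes this possible).
    2. Find [g] with [g.D ⊆ L] and [g^-1.D ⊆ R]: translate [D] far away by some
       [x], so that [x.D] and [x^-1.D] miss [B]; [x.D ⊆ L] is arranged, and
       [x^-1.D ⊆ L] is impossible since [R] could then not meet its translates,
       or would be right-K-closed and hence all of [G].
    3. Escaping: every orbit [g^z.u] leaves [L] as [z -> -oo] (otherwise the set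
       of points whose negative orbit stays in [L] would be right-K-closed and
       contain all of [L], including [g.D]), and dually leaves [R], hence enters
       [L], as [z -> +oo].
    4. So each orbit crosses the boundary [A = {y ∈ L | g^-1.y ∉ L} ⊆ L Δ g.L],
       which is bounded since [G] acts trivially on [L]; this gives [G = A^-1<g>]. *)

From Stdlib Require Import ZArith Lia Classical.

Local Infix "⋅" := gmul (at level 40, left associativity).

Section GroupAlgebra.
Context {G : Group}.
Implicit Types a b c g : G.

Lemma mulKg a b : ginv a ⋅ (a ⋅ b) = b.
Proof. rewrite gmulA, gmulVl, gmul1l. reflexivity. Qed.

Lemma mulKVg a b : a ⋅ (ginv a ⋅ b) = b.
Proof. rewrite gmulA, gmulVr, gmul1l. reflexivity. Qed.

Lemma mulgK a b : a ⋅ b ⋅ ginv b = a.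
Proof. rewrite <- gmulA, gmulVr, gmul1r. reflexivity. Qed.

Lemma mulgVK a b : a ⋅ ginv b ⋅ b = a.
Proof. rewrite <- gmulA, gmulVl, gmul1r. reflexivity. Qed.

Lemma inv_uniq a b : a ⋅ b = gone G -> b = ginv a.
Proof. intro H. rewrite <- (mulKg a b), H, gmul1r. reflexivity. Qed.

Lemma invgK a : ginv (ginv a) = a.
Proof. symmetry. apply inv_uniq, gmulVl. Qed.

Lemma invgM a b : ginv (a ⋅ b) = ginv b ⋅ ginv a.
Proof.
  symmetry. apply inv_uniq.
  rewrite gmulA, <- (gmulA _ a b), gmulVr, gmul1r, gmulVr. reflexivity.
Qed.

Lemma invg1 : ginv (gone G) = gone G.
Proof. symmetry. apply inv_uniq, gmul1l. Qed.

Lemma translate_quotient a b c : ginv (c ⋅ a) ⋅ (c ⋅ b) = ginv a ⋅ b.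
Proof. rewrite invgM, <- gmulA, mulKg. reflexivity. Qed.

Lemma gpow_succ_l g n : gpow g (S n) = g ⋅ gpow g n.
Proof.
  induction n as [|n IH].
  - change (gone G ⋅ g = g ⋅ gone G). rewrite gmul1l, gmul1r. reflexivity.
  - change (gpow g (S n) ⋅ g = g ⋅ (gpow g n ⋅ g)). rewrite IH, gmulA. reflexivity.
Qed.

Lemma zpow_succ g z : zpow g (Z.succ z) = g ⋅ zpow g z.
Proof.
  destruct z as [|p|p].
  - change (gone G ⋅ g = g ⋅ gone G). rewrite gmul1l, gmul1r. reflexivity.
  - replace (Z.succ (Z.pos p)) with (Z.pos (Pos.succ p)) by lia.
    change (gpow g (Pos.to_nat (Pos.succ p)) = g ⋅ gpow g (Pos.to_nat p)).
    rewrite Pos2Nat.inj_succ. apply gpow_succ_l.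
  - destruct (Pos.succ_pred_or p) as [-> | <-].
    + change (gone G = g ⋅ ginv (gone G ⋅ g)). rewrite gmul1l, gmulVr. reflexivity.
    + set (q := Pos.pred p).
      replace (Z.succ (Z.neg (Pos.succ q))) with (Z.neg q) by lia.
      change (ginv (gpow g (Pos.to_nat q))
              = g ⋅ ginv (gpow g (Pos.to_nat (Pos.succ q)))).
      rewrite Pos2Nat.inj_succ.
      change (ginv (gpow g (Pos.to_nat q))
              = g ⋅ ginv (gpow g (Pos.to_nat q) ⋅ g)).
      rewrite invgM, mulKVg. reflexivity.
Qed.

Lemma zpow_pred g z : zpow g (Z.pred z) = ginv g ⋅ zpow g z.
Proof.
  pose proof (zpow_succ g (Z.pred z)) as E. rewrite Z.succ_pred in E.
  rewrite E, mulKg. reflexivity.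
Qed.

Lemma zpow_of_nat g n : zpow g (Z.of_nat n) = gpow g n.
Proof.
  destruct n as [|n]; [reflexivity|].
  change (gpow g (Pos.to_nat (Pos.of_succ_nat n)) = gpow g (S n)).
  rewrite SuccNat2Pos.id_succ. reflexivity.
Qed.

Lemma gpow_inv g n : gpow (ginv g) n = ginv (gpow g n).
Proof.
  induction n as [|n IH].
  - symmetry. apply invg1.
  - change (gpow (ginv g) n ⋅ ginv g = ginv (gpow g (S n))).
    rewrite IH, gpow_succ_l, invgM. reflexivity.
Qed.

Lemma zpow_opp_nat g n : zpow g (- Z.of_nat n) = gpow (ginv g) n.
Proof.
  rewrite gpow_inv. destruct n as [|n].
  - symmetry. apply invg1.
  - change (ginv (gpow g (Pos.to_nat (Pos.of_succ_nat n))) = ginv (gpow g (S n))).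
    rewrite SuccNat2Pos.id_succ. reflexivity.
Qed.

End GroupAlgebra.

Section Chains.
Context {G : Group} {K : gset G}.

Lemma Kjoined_last {A : gset G} {x y} : Kjoined K A x y -> A y.
Proof. induction 1; assumption. Qed.

Lemma Kjoined_trans {A : gset G} {x y z} :
  Kjoined K A x y -> Kjoined K A y z -> Kjoined K A x z.
Proof. intros Hxy Hyz. induction Hyz; [exact Hxy | eapply Kj_step; eauto]. Qed.

Lemma Kjoined_sym {A : gset G} {x y} :
  symmetric K -> Kjoined K A x y -> Kjoined K A y x.
Proof.
  intros HK H. induction H as [Hx | y z Hxy IH Hz Hk].
  - apply Kj_refl; exact Hx.
  - eapply Kjoined_trans; [|exact IH].
    eapply Kj_step; [apply Kj_refl; exact Hz | exact (Kjoined_last Hxy) |].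
    apply HK. rewrite invgM, invgK. exact Hk.
Qed.

Lemma Kjoined_mono {A A' : gset G} {x y} :
  subset A A' -> Kjoined K A x y -> Kjoined K A' x y.
Proof. intros HA H. induction H; [apply Kj_refl | eapply Kj_step]; eauto. Qed.

Lemma Kjoined_translate {S A : gset G} {c u v} :
  (forall s, S s -> A (c ⋅ s)) -> Kjoined K S u v -> Kjoined K A (c ⋅ u) (c ⋅ v).
Proof.
  intros HS H. induction H as [Hu | y z _ IH Hz Hk].
  - apply Kj_refl; auto.
  - eapply Kj_step; [exact IH | auto | rewrite translate_quotient; exact Hk].
Qed.

Lemma right_closed_chain {P S : gset G} {u v} :
  (forall s k, P s -> K k -> P (s ⋅ k)) -> Kjoined K S u v -> P u -> P v.
Proof.
  intros HP H Hu. induction H as [|y z _ IH _ Hk]; [exact Hu|].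
  rewrite <- (mulKVg y z). apply HP; auto.
Qed.

Section Component.
Context {A C : gset G}.
Hypothesis HC : Kcomponent K A C.

Lemma component_sub {y} : C y -> A y.
Proof. destruct HC as [x0 [_ E]]. intro Hy. exact (Kjoined_last (proj1 (E y) Hy)). Qed.

Lemma component_nonempty : exists c, C c.
Proof. destruct HC as [x0 [Hx0 E]]. exists x0. apply E, Kj_refl, Hx0. Qed.

Lemma component_step {u v} : C u -> A v -> K (ginv u ⋅ v) -> C v.
Proof.
  destruct HC as [x0 [_ E]]. intros Hu Hv Hk.
  apply E. eapply Kj_step; [apply E; exact Hu | exact Hv | exact Hk].
Qed.

Lemma component_chain_closed {u v} : Kjoined K A u v -> C u -> C v.
Proof.
  intros H Hu. induction H as [|y z _ IH Hz Hk]; [exact Hu|].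
  exact (component_step IH Hz Hk).
Qed.

Lemma component_chain_inside {u v} : Kjoined K A u v -> C u -> Kjoined K C u v.
Proof.
  intros H Hu. induction H as [|y z _ IH Hz Hk]; [apply Kj_refl; exact Hu|].
  eapply Kj_step; [exact IH | | exact Hk].
  exact (component_step (Kjoined_last IH) Hz Hk).
Qed.

Lemma component_connected : symmetric K -> Kconnected K C.
Proof.
  intros HK y z Hy Hz. pose proof HC as [x0 [Hx0 E]].
  assert (Cx0 : C x0) by (apply E, Kj_refl, Hx0).
  assert (from_x0 : forall w, C w -> Kjoined K C x0 w)
    by (intros w Hw; exact (component_chain_inside (proj1 (E w) Hw) Cx0)).
  exact (Kjoined_trans (Kjoined_sym HK (from_x0 y Hy)) (from_x0 z Hz)).
Qed.

Lemma component_translate {S : gset G} {c u v} :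
  Kjoined K S u v -> (forall s, S s -> A (c ⋅ s)) -> C (c ⋅ u) -> C (c ⋅ v).
Proof. intros H HS. apply component_chain_closed, (Kjoined_translate HS H). Qed.

End Component.

Lemma component_eq_of_common {A C1 C2 : gset G} {y : G} :
  symmetric K -> Kcomponent K A C1 -> Kcomponent K A C2 -> C1 y -> C2 y -> seteq C1 C2.
Proof.
  intros HK H1 H2 Hy1 Hy2 z. split; intro Hz.
  - apply (component_chain_closed H2 (u := y)); [|exact Hy2].
    apply (Kjoined_mono (fun w Hw => component_sub H1 Hw)), (component_connected H1 HK _ _ Hy1 Hz).
  - apply (component_chain_closed H1 (u := y)); [|exact Hy1].
    apply (Kjoined_mono (fun w Hw => component_sub H2 Hw)), (component_connected H2 HK _ _ Hy2 Hz).
Qed.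

Lemma two_components_cover {A L R : gset G} :
  (forall C, Kcomponent K A C -> seteq C L \/ seteq C R) ->
  forall y, A y -> L y \/ R y.
Proof.
  intros Hall y Hy.
  assert (Hcomp : Kcomponent K A (Kjoined K A y)) by (exists y; split; [exact Hy | tauto]).
  destruct (Hall _ Hcomp) as [E|E]; [left|right]; apply E, Kj_refl, Hy.
Qed.

Lemma setpow_one m : K (gone G) -> setpow K (S m) (gone G).
Proof.
  intro H1. induction m as [|m IH]; [exact H1|].
  exists (gone G), (gone G). split; [exact IH|]. split; [exact H1|]. rewrite gmul1l. reflexivity.
Qed.

Lemma setpow_joined {m x} :
  K (gone G) -> setpow K (S m) x -> Kjoined K (setpow K (S m)) (gone G) x.
Proof.
  intro H1. revert x. induction m as [|m IH]; intros x Hx.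
  - eapply Kj_step; [apply Kj_refl; exact H1 | exact Hx | rewrite invg1, gmul1l; exact Hx].
  - destruct Hx as [a [k [Ha [Hk ->]]]].
    assert (Hsub : subset (setpow K (S m)) (setpow K (S (S m)))).
    { intros z Hz. exists z, (gone G). repeat split; [exact Hz | exact H1 |].
      rewrite gmul1r. reflexivity. }
    eapply Kj_step; [exact (Kjoined_mono Hsub (IH a Ha)) | exists a, k; auto |].
    rewrite mulKg. exact Hk.
Qed.

End Chains.

Section Bornology.
Context {G : LSGroup}.

Lemma bounded_singleton (x : G) : bounded (fun y : G => y = x).
Proof.
  destruct (bnd_cover G x) as [B0 [HB0 Hx]].
  apply (bnd_sub _ HB0). intros y ->. exact Hx.
Qed.

Lemma bounded_setpow {K : gset G} (m : nat) : bounded K -> bounded (setpow K (S m)).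
Proof.
  intro HK. induction m as [|m IH]; [exact HK|]. apply bnd_mul; assumption.
Qed.

Lemma far_element {C E : gset G} (d : G) :
  ~ bounded C -> bounded E -> exists x, ~ E x /\ C (x ⋅ d).
Proof.
  intros HCu HE. apply NNPP. intro Hnone. apply HCu.
  apply (bnd_sub _ (bnd_mul _ _ _ HE (bounded_singleton d))).
  intros l Hl. exists (l ⋅ ginv d), d. repeat split.
  - apply NNPP. intro HnE. apply Hnone. exists (l ⋅ ginv d). rewrite mulgVK. auto.
  - rewrite mulgVK. reflexivity.
Qed.

Lemma translate_meets {C : gset G} (c : G) :
  ~ bounded C -> acts_trivially C -> exists a, C a /\ C (c ⋅ a).
Proof.
  intros HCu HCt. apply NNPP. intro Hnone. apply HCu.
  apply (bnd_sub _ (HCt c)). intros y Hy. left. split; [exact Hy|].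
  intros [a [Ha ->]]. apply Hnone. exists a. auto.
Qed.

(** Such a [C], if also K-connected and closed under right multiplication by
    [K], is all of [G]: [y = c.r0] where [c.C] meets [C] and [C] is joined to [r0]. *)
Lemma right_closed_everything {K C : gset G} :
  ~ bounded C -> acts_trivially C -> Kconnected K C ->
  (forall s k, C s -> K k -> C (s ⋅ k)) -> forall y, C y.
Proof.
  intros HCu HCt HCc Hright y.
  destruct (translate_meets (gone G) HCu HCt) as [r0 [Hr0 _]].
  set (c := y ⋅ ginv r0).
  destruct (translate_meets c HCu HCt) as [a [Ha Hca]].
  assert (Hcr : forall s k, C (c ⋅ s) -> K k -> C (c ⋅ (s ⋅ k)))
    by (intros s k Hs Hk; rewrite gmulA; auto).
  replace y with (c ⋅ r0) by (unfold c; apply mulgVK).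
  exact (right_closed_chain Hcr (HCc a r0 Ha Hr0) Hca).
Qed.

Lemma bounded_connected_hull {K B : gset G} :
  symmetric K -> bounded K -> K (gone G) -> bounded B ->
  (Kconnected K B \/ exists (h : G) (n : nat), 1 <= n /\ subset B (ltrans h (setpow K n))) ->
  exists D, bounded D /\ Kconnected K D /\ subset B D /\ exists d, D d.
Proof.
  intros HK HKb H1 HB [Hc | [h [n [Hn Hsub]]]].
  - destruct (classic (exists b, B b)) as [Hne|Hempty].
    + exists B. repeat split; auto. intros x Hx. exact Hx.
    + exists (fun y => y = gone G). repeat split.
      * apply bounded_singleton.
      * intros x y -> ->. apply Kj_refl. reflexivity.
      * intros w Hw. exfalso. apply Hempty. exists w. exact Hw.
      * exists (gone G). reflexivity.
  - destruct n as [|m]; [lia|].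
    exists (ltrans h (setpow K (S m))). repeat split; [| | exact Hsub |].
    + apply (bnd_sub _ (bnd_mul _ _ _ (bounded_singleton h) (bounded_setpow m HKb))).
      intros x [a [Ha ->]]. exists h, a. auto.
    + intros x y [a [Ha ->]] [b [Hb ->]].
      apply (Kjoined_translate (S := setpow K (S m))); [intros s Hs; exists s; auto|].
      exact (Kjoined_trans (Kjoined_sym HK (setpow_joined H1 Ha)) (setpow_joined H1 Hb)).
    + exists (h ⋅ gone G), (gone G). split; [apply setpow_one; exact H1 | reflexivity].
Qed.

End Bornology.

Record two_sided {G : Group} (K B L R : gset G) : Prop := {
  side_L : Kcomponent K (fun x => ~ B x) L;
  side_R : Kcomponent K (fun x => ~ B x) R;
  sides_cover : forall y, ~ B y -> L y \/ R y;
  sides_disjoint : forall y, L y -> R y -> False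
}.
Arguments side_L {G K B L R}. Arguments side_R {G K B L R}.
Arguments sides_cover {G K B L R}. Arguments sides_disjoint {G K B L R}.

Lemma two_sided_swap {G : Group} {K B L R : gset G} :
  two_sided K B L R -> two_sided K B R L.
Proof.
  intros [HL HR Hcover Hdisj]. split; auto.
  - intros y Hy. destruct (Hcover y Hy); auto.
  - intros y Hr Hl. exact (Hdisj y Hl Hr).
Qed.

Section TwoSides.
Context {G : LSGroup} {K B L R D : gset G}.
Hypothesis HK : symmetric K.
Hypothesis HS : two_sided K B L R.
Hypothesis HBD : subset B D.

Lemma translate_side (x : G) {S : gset G} {s0 : G} :
  Kconnected K S -> S s0 -> (forall s, S s -> ~ B (x ⋅ s)) ->
  (forall s, S s -> L (x ⋅ s)) \/ (forall s, S s -> R (x ⋅ s)).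
Proof.
  intros HSc Hs0 HxS.
  destruct (sides_cover HS _ (HxS s0 Hs0)) as [H|H]; [left|right]; intros s Hs;
    [exact (component_translate (side_L HS) (HSc s0 s Hs0 Hs) HxS H)
    |exact (component_translate (side_R HS) (HSc s0 s Hs0 Hs) HxS H)].
Qed.

(** [x.D] and [x^-1.D] cannot both lie in [L]: then [x.R] misses [B], and it can
    neither lie in [L] (it must meet [R]) nor in [R] (a point [r ∈ R] a K-step
    from [d ∈ D] would put [x.r ∈ R] next to [x.d ∈ L]; with no such point, [R]
    is right-K-closed and hence everything). *)
Lemma not_both_translates_left (x : G) :
  ~ bounded R -> acts_trivially R ->
  (forall w, D w -> L (x ⋅ w)) -> (forall w, D w -> L (ginv x ⋅ w)) -> False.
Proof.
  intros HRu HRt HxL HxiL.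
  pose proof (side_L HS) as HL. pose proof (side_R HS) as HR.
  pose proof (sides_disjoint HS) as Hdisj.
  assert (HxR_off : forall r, R r -> ~ B (x ⋅ r)).
  { intros r Hr Hb. pose proof (HxiL _ (HBD _ Hb)) as Hl.
    rewrite mulKg in Hl. exact (Hdisj r Hl Hr). }
  destruct (component_nonempty HR) as [r0 Hr0].
  destruct (translate_side x (component_connected HR HK) Hr0 HxR_off) as [HxRL|HxRR].
  - destruct (translate_meets x HRu HRt) as [a [Ha Hxa]].
    exact (Hdisj _ (HxRL a Ha) Hxa).
  - destruct (classic (exists r d, R r /\ D d /\ K (ginv r ⋅ d)))
      as [[r [d [Hr [Hd Hk]]]] | Hapart].
    + apply (Hdisj _ (HxL d Hd)). apply (component_step HR (HxRR r Hr)).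
      * exact (component_sub HL (HxL d Hd)).
      * rewrite translate_quotient. exact Hk.
    + assert (Hright : forall s k, R s -> K k -> R (s ⋅ k)).
      { intros s k Hs Hk. destruct (classic (B (s ⋅ k))) as [Hb|Hb].
        - exfalso. apply Hapart. exists s, (s ⋅ k). rewrite mulKg. auto.
        - apply (component_step HR Hs Hb). rewrite mulKg. exact Hk. }
      destruct (component_nonempty HL) as [l0 Hl0].
      exact (Hdisj l0 Hl0
               (right_closed_everything HRu HRt (component_connected HR HK) Hright l0)).
Qed.

Lemma two_sided_translate {d0 : G} :
  bounded B -> bounded D -> Kconnected K D -> D d0 ->
  ~ bounded L -> ~ bounded R -> acts_trivially R ->
  exists g, (forall w, D w -> L (g ⋅ w)) /\ (forall w, D w -> R (ginv g ⋅ w)).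
Proof.
  intros HBb HDb HDc Hd0 HLu HRu HRt.
  set (E := setU (setmul B (setinv D)) (setmul D (setinv B))).
  assert (HE : bounded E) by (apply bnd_union; apply bnd_mul; auto; apply bnd_inv; auto).
  destruct (far_element d0 HLu HE) as [x [HxE Hxd0]].
  assert (Hx_off : forall w, D w -> ~ B (x ⋅ w)).
  { intros w Hw Hb. apply HxE. left. exists (x ⋅ w), (ginv w).
    repeat split; [exact Hb | exists w; auto | symmetry; apply mulgK]. }
  assert (Hxi_off : forall w, D w -> ~ B (ginv x ⋅ w)).
  { intros w Hw Hb. apply HxE. right. exists w, (ginv (ginv x ⋅ w)).
    repeat split; [exact Hw | exists (ginv x ⋅ w); auto |].
    rewrite invgM, invgK, mulKVg. reflexivity. }
  assert (HxL : forall w, D w -> L (x ⋅ w)).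
  { destruct (translate_side x HDc Hd0 Hx_off) as [H|H]; [exact H|].
    exfalso. exact (sides_disjoint HS _ Hxd0 (H d0 Hd0)). }
  destruct (translate_side (ginv x) HDc Hd0 Hxi_off) as [HiL|HiR].
  - exfalso. exact (not_both_translates_left x HRu HRt HxL HiL).
  - exists x. auto.
Qed.

(** If [u] and [h.u] lie in [L], so does [u.k] for [k ∈ K] (given [h^-1.D ⊆ L]
    and [h.D ⊆ R]): were [u.k ∈ B], then [h.u.k ∈ R] is either in [B], whence
    [u.k ∈ h^-1.D ⊆ L], or a K-step from [h.u ∈ L]. *)
Lemma escape_step (h u k : G) :
  (forall w, D w -> L (ginv h ⋅ w)) -> (forall w, D w -> R (h ⋅ w)) ->
  L u -> L (h ⋅ u) -> K k -> L (u ⋅ k).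
Proof.
  intros HhL HhR Hu Hhu Hk.
  pose proof (side_L HS) as HL. pose proof (sides_disjoint HS) as Hdisj.
  destruct (classic (B (u ⋅ k))) as [Hb|Hb].
  2: { apply (component_step HL Hu Hb). rewrite mulKg. exact Hk. }
  exfalso.
  pose proof (HhR _ (HBD _ Hb)) as Hhuk.
  destruct (classic (B (h ⋅ (u ⋅ k)))) as [Hb'|Hb'].
  - pose proof (HhL _ (HBD _ Hb')) as Hl. rewrite mulKg in Hl.
    exact (component_sub HL Hl Hb).
  - assert (Hl : L (h ⋅ u ⋅ k)).
    { apply (component_step HL Hhu); [rewrite <- gmulA; exact Hb' | rewrite mulKg; exact Hk]. }
    rewrite <- gmulA in Hl. exact (Hdisj _ Hl Hhuk).
Qed.

(** Otherwise the points whose whole [h]-orbit stays in [L] form a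
    right-K-closed set containing [L], hence [h^-1.d]; but [h^2.h^-1.d ∈ R]. *)
Lemma escapes (h : G) {d0 : G} :
  D d0 -> (forall w, D w -> L (ginv h ⋅ w)) -> (forall w, D w -> R (h ⋅ w)) ->
  forall x, exists n, ~ L (gpow h n ⋅ x).
Proof.
  intros Hd0 HhL HhR x. apply NNPP. intro Hstuck.
  pose proof (side_L HS) as HL.
  set (Stay := fun y => forall n, L (gpow h n ⋅ y)).
  assert (Hx : Stay x) by (intro n; apply NNPP; intro Hn; apply Hstuck; exists n; exact Hn).
  assert (Hclosed : forall y k, Stay y -> K k -> Stay (y ⋅ k)).
  { intros y k Hy Hk n. rewrite gmulA. apply (escape_step h); auto.
    rewrite gmulA, <- gpow_succ_l. apply Hy. }
  assert (Lx : L x) by (pose proof (Hx 0) as H0; rewrite gmul1l in H0; exact H0).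
  assert (Hstay : forall y, L y -> Stay y)
    by (intros y Hy; exact (right_closed_chain Hclosed (component_connected HL HK _ _ Lx Hy) Hx)).
  pose proof (Hstay _ (HhL d0 Hd0) 2) as H2.
  change (L (gone G ⋅ h ⋅ h ⋅ (ginv h ⋅ d0))) in H2.
  rewrite gmul1l, <- gmulA, mulKVg in H2.
  exact (sides_disjoint HS _ H2 (HhR d0 Hd0)).
Qed.

End TwoSides.

(** Every [g]-orbit lies partly outside [L] (towards [-oo]) and partly inside
    [L] (towards [+oo]: once it escapes [R], it is in [L] or one step before). *)
Lemma orbit_meets_L {G : LSGroup} {K B L R D : gset G} {g d0 : G} :
  symmetric K -> two_sided K B L R -> subset B D -> D d0 ->
  (forall w, D w -> L (g ⋅ w)) -> (forall w, D w -> R (ginv g ⋅ w)) ->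
  forall u, exists a b, (a <= b)%Z /\ ~ L (zpow g a ⋅ u) /\ L (zpow g b ⋅ u).
Proof.
  intros HK HS HBD Hd0 HgL HgR u.
  assert (HginvL : forall w, D w -> L (ginv (ginv g) ⋅ w)) by (intros; rewrite invgK; auto).
  destruct (escapes HK HS HBD (ginv g) Hd0 HginvL HgR u) as [n Hn].
  destruct (escapes HK (two_sided_swap HS) HBD g Hd0 HgR HgL u) as [m Hm].
  exists (- Z.of_nat n)%Z. rewrite zpow_opp_nat.
  destruct (classic (B (gpow g m ⋅ u))) as [Hb|Hb].
  - exists (Z.of_nat (S m)). rewrite zpow_of_nat, gpow_succ_l, <- gmulA.
    repeat split; [lia | exact Hn | exact (HgL _ (HBD _ Hb))].
  - exists (Z.of_nat m). rewrite zpow_of_nat.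
    destruct (sides_cover HS _ Hb); [repeat split; [lia | exact Hn | assumption] | contradiction].
Qed.

Lemma Z_switch (P : Z -> Prop) {a b : Z} :
  (a <= b)%Z -> ~ P a -> P b -> exists z, ~ P z /\ P (Z.succ z).
Proof.
  intros Hab Ha. replace b with (a + Z.of_nat (Z.to_nat (b - a)))%Z by lia.
  induction (Z.to_nat (b - a)) as [|k IH]; intro Hk.
  - rewrite Z.add_0_r in Hk. contradiction.
  - destruct (classic (P (a + Z.of_nat k)%Z)) as [H|H]; [exact (IH H)|].
    exists (a + Z.of_nat k)%Z. rewrite Nat2Z.inj_succ, Z.add_succ_r in Hk. auto.
Qed.

Lemma orbit_crosses_boundary {G : Group} {g x : G} {L : gset G} (a b : Z) :
  (a <= b)%Z -> ~ L (zpow g a ⋅ ginv x) -> L (zpow g b ⋅ ginv x) ->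
  setmul (setinv (fun y => L y /\ ~ L (ginv g ⋅ y))) (cyclic_sub g) x.
Proof.
  intros Hab Ha Hb.
  destruct (Z_switch (fun z => L (zpow g z ⋅ ginv x)) Hab Ha Hb) as [z [Hout Hin]].
  exists (ginv (zpow g (Z.succ z) ⋅ ginv x)), (zpow g (Z.succ z)). repeat split.
  - exists (zpow g (Z.succ z) ⋅ ginv x). repeat split; [exact Hin|].
    rewrite gmulA, <- zpow_pred, Z.pred_succ. exact Hout.
  - exists (Z.succ z). reflexivity.
  - rewrite invgM, mulgVK, invgK. reflexivity.
Qed.

Theorem proposition5p6 (G : LSGroup) (K B L R : gset G) :
  symmetric K -> bounded K -> K (gone G) ->
  bounded B ->
  (* G \ B has exactly two K-components L and R *)
  Kcomponent K (fun x => ~ B x) L -> Kcomponent K (fun x => ~ B x) R -> ~ seteq L R ->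
  (forall C, Kcomponent K (fun x => ~ B x) C -> seteq C L \/ seteq C R) ->
  ~ bounded L -> ~ bounded R ->
  acts_trivially L -> acts_trivially R ->
  (Kconnected K B \/
   exists (h : G) (n : nat), 1 <= n /\ subset B (ltrans h (setpow K n))) ->
  has_cyclic_bounded_index G.
Proof.
  intros HK HKb HK1 HBb HL HR HLR Hall HLu HRu HLt HRt Hcase.
  assert (HS : two_sided K B L R).
  { split; [exact HL | exact HR | exact (two_components_cover Hall) |].
    intros y Hl Hr. exact (HLR (component_eq_of_common HK HL HR Hl Hr)). }
  destruct (bounded_connected_hull HK HKb HK1 HBb Hcase) as [D [HDb [HDc [HBD [d0 Hd0]]]]].
  destruct (two_sided_translate HK HS HBD HBb HDb HDc Hd0 HLu HRu HRt) as [g [HgL HgR]].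
  exists g, (setinv (fun y => L y /\ ~ L (ginv g ⋅ y))). split.
  - apply bnd_inv, (bnd_sub _ (HLt g)). intros y [Hy Hout]. left. split; [exact Hy|].
    intros [a [Ha ->]]. rewrite mulKg in Hout. contradiction.
  - intro x.
    destruct (orbit_meets_L HK HS HBD Hd0 HgL HgR (ginv x)) as [a [b [Hab [Ha Hb]]]].
    exact (orbit_crosses_boundary a b Hab Ha Hb).
Qed.
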